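(* For every real $\epsilon > 0$ and every positive integer $k$, there are only finitely many numerical semigroups $\Lambda$ with $e(\Lambda) = k$ and $m(\Lambda) > \epsilon\, c(\Lambda)$. (In the proof it is shown that any such $\Lambda$ satisfies $c(\Lambda) \le 2^k/\epsilon^k$.)
   Context: A numerical semigroup is a subset $\Lambda \subseteq \mathbb{Z}_{\ge 0}$ that contains $0$, is closed under addition, and has finite complement in $\mathbb{Z}_{\ge 0}$. Every numerical semigroup has a unique minimal (with respect to inclusion) generating set, which is finite; its size is the embedding dimension $e(\Lambda)$. The conductor is $c(\Lambda) = \max(\mathbb{Z}_{\ge 0}\setminus\Lambda) + 1$ (with $c(\Lambda)=0$ if $\Lambda = \mathbb{Z}_{\ge 0}$). The multiplicity is $m(\Lambda) = \min(\Lambda\setminus\{0\})$. *)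

From Stdlib Require Import Reals Arith List.
Import ListNotations.

Definition numerical_semigroup (S : nat -> Prop) : Prop :=
  S 0%nat /\
  (forall a b, S a -> S b -> S (a + b)%nat) /\
  (exists N, forall n, (N <= n)%nat -> S n).

Inductive gen (G : list nat) : nat -> Prop :=
| gen0 : gen G 0
| genS : forall x n, In x G -> gen G n -> gen G (x + n).

Definition generates (S : nat -> Prop) (G : list nat) : Prop :=
  forall n, S n <-> gen G n.

Definition minimal_generating_set (S : nat -> Prop) (G : list nat) : Prop :=
  NoDup G /\ generates S G /\
  (forall G', incl G' G -> generates S G' -> incl G G').

Definition embedding_dimension (S : nat -> Prop) (k : nat) : Prop :=
  exists G, minimal_generating_set S G /\ length G = k.

Definition is_multiplicity (S : nat -> Prop) (m : nat) : Prop :=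
  S m /\ (0 < m)%nat /\ (forall n, S n -> (0 < n)%nat -> (m <= n)%nat).

Definition is_conductor (S : nat -> Prop) (c : nat) : Prop :=
  (forall n, (c <= n)%nat -> S n) /\ (c = 0%nat \/ ~ S (c - 1)%nat).

From Stdlib Require Import Reals Arith List Lia Lra Psatz Classical ZArith.
Import ListNotations.

(* Let G be the minimal generating set of S, with |G| = k,
   multiplicity m and conductor c, and fix T > 0 with eps * T > 1, so that
   m > eps * c forces c < T * m.  Every generator is >= m, hence an element of
   S below (j+1)*m is a sum of at most j generators; there are at most
   (1+k)^j such sums, listed explicitly by [sums G j].  The m consecutive
   elements c, ..., c+m-1 of S all lie below (T+1)*m, so m <= (1+k)^T and
   therefore c <= T * (1+k)^T =: B, a bound depending only on eps and k.
   A set containing every n >= B is determined by its trace on [0, B), which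
   is one of 2^B bit strings; the finite list [truncations B] of predicates
   built from these strings thus represents every such semigroup. *)

Fixpoint sums (G : list nat) (j : nat) : list nat :=
  match j with
  | O => [0%nat]
  | S j' => sums G j' ++ flat_map (fun x => map (plus x) (sums G j')) G
  end.

Lemma sums_length (G : list nat) (j : nat) :
  length (sums G j) = ((1 + length G) ^ j)%nat.
Proof.
  induction j as [|j IH]; simpl; [reflexivity|].
  rewrite length_app, IH.
  assert (Hflat : forall l,
    length (flat_map (fun x => map (plus x) (sums G j)) l)
    = (length l * (1 + length G) ^ j)%nat).
  { induction l as [|x l IHl]; simpl; [reflexivity|].
    rewrite length_app, length_map, IHl, IH. ring. }
  rewrite Hflat. simpl. ring.
Qed.

Lemma zero_in_sums (G : list nat) (j : nat) : In 0%nat (sums G j).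
Proof.
  induction j as [|j IH]; simpl; [auto|]. apply in_or_app; auto.
Qed.

Lemma gen_in_sums (G : list nat) (m : nat) :
  (0 < m)%nat -> (forall x, In x G -> (m <= x)%nat) ->
  forall n, gen G n -> forall j, (n < S j * m)%nat -> In n (sums G j).
Proof.
  intros Hm HG n Hn.
  induction Hn as [|x n Hx Hn IH]; intros j Hj; [apply zero_in_sums|].
  pose proof (HG x Hx) as Hmx.
  destruct j as [|j]; [simpl in Hj; lia|].
  simpl. apply in_or_app; right. apply in_flat_map. exists x; split; [exact Hx|].
  apply in_map, IH. simpl in *. lia.
Qed.

Lemma window_bound (G : list nat) (m c j : nat) :
  (0 < m)%nat -> (forall x, In x G -> (m <= x)%nat) ->
  (forall n, (c <= n < c + m)%nat -> gen G n) ->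
  (c < j * m)%nat ->
  (m <= (1 + length G) ^ j)%nat.
Proof.
  intros Hm HG Hwin Hc.
  assert (Hincl : incl (seq c m) (sums G j)).
  { intros n Hn. apply in_seq in Hn.
    apply (gen_in_sums G m Hm HG); [apply Hwin; lia|]. simpl. nia. }
  pose proof (NoDup_incl_length (seq_NoDup m c) Hincl) as Hlen.
  rewrite length_seq, sums_length in Hlen. exact Hlen.
Qed.

Lemma gen_incl (G G' : list nat) (n : nat) : incl G' G -> gen G' n -> gen G n.
Proof. intros Hi H; induction H; constructor; auto. Qed.

(* A minimal generating set does not contain 0: removing 0 from a generating
   set still generates, so minimality would put 0 outside G. *)
Lemma minimal_generating_set_no_zero (S : nat -> Prop) (G : list nat) :
  minimal_generating_set S G -> ~ In 0%nat G.
Proof.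
  intros [_ [Hgen Hmin]] H0.
  set (G' := remove Nat.eq_dec 0%nat G).
  assert (Hsub : incl G' G) by (intros x Hx; exact (proj1 (in_remove _ _ _ _ Hx))).
  assert (Hgen' : generates S G').
  { intros n; split; intro Hs.
    - apply Hgen in Hs. induction Hs as [|x n Hx _ IH]; [constructor|].
      destruct (Nat.eq_dec x 0) as [->|Hne]; [exact IH|].
      constructor; [apply in_in_remove|]; assumption.
    - apply Hgen, (gen_incl G G'); assumption. }
  exact (remove_In Nat.eq_dec G 0%nat (Hmin G' Hsub Hgen' 0%nat H0)).
Qed.

Lemma minimal_generator_ge_multiplicity (S : nat -> Prop) (G : list nat) (m : nat) :
  minimal_generating_set S G -> is_multiplicity S m ->
  forall x, In x G -> (m <= x)%nat.
Proof.
  intros HG [_ [_ Hmin]] x Hx. apply Hmin.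
  - destruct HG as [_ [Hgen _]]. apply Hgen.
    rewrite <- (Nat.add_0_r x). constructor; [exact Hx|constructor].
  - destruct x as [|x]; [|lia].
    exfalso. exact (minimal_generating_set_no_zero S G HG Hx).
Qed.

Lemma conductor_bound (S : nat -> Prop) (G : list nat) (m c T : nat) :
  minimal_generating_set S G -> is_multiplicity S m -> is_conductor S c ->
  (c < T * m)%nat -> (c <= T * (1 + length G) ^ T)%nat.
Proof.
  intros HG Hmul [Hc _] HcT.
  assert (Hm : (m <= (1 + length G) ^ T)%nat).
  { apply (window_bound G m c T).
    - destruct Hmul as [_ [Hm _]]. exact Hm.
    - exact (minimal_generator_ge_multiplicity S G m HG Hmul).
    - destruct HG as [_ [Hgen _]]. intros n Hn. apply Hgen, Hc. lia.
    - lia. }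
  nia.
Qed.

Fixpoint all_bits (B : nat) : list (list bool) :=
  match B with
  | O => [[]]
  | S B' => map (cons true) (all_bits B') ++ map (cons false) (all_bits B')
  end.

Lemma all_bits_complete (B : nat) (P : nat -> Prop) :
  exists b, In b (all_bits B) /\
    forall i, (i < B)%nat -> (nth i b false = true <-> P i).
Proof.
  revert P; induction B as [|B IH]; intros P.
  - exists []; split; [simpl; auto|intros; lia].
  - destruct (IH (fun i => P (S i))) as [b [Hb Hbits]].
    assert (Htail : forall a i, (S i < S B)%nat ->
              (nth (S i) (a :: b) false = true <-> P (S i))).
    { intros a i Hi. apply Hbits. lia. }
    destruct (classic (P 0%nat)) as [HP|HP].
    + exists (true :: b); split; [simpl; apply in_or_app; left; apply in_map, Hb|].
      intros [|i] Hi; [simpl; tauto|apply Htail, Hi].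
    + exists (false :: b); split; [simpl; apply in_or_app; right; apply in_map, Hb|].
      intros [|i] Hi; [simpl; split; [discriminate|contradiction]|apply Htail, Hi].
Qed.

Definition truncations (B : nat) : list (nat -> Prop) :=
  map (fun b x => (B <= x)%nat \/ nth x b false = true) (all_bits B).

Lemma truncations_complete (B : nat) (P : nat -> Prop) :
  (forall n, (B <= n)%nat -> P n) ->
  exists Q, In Q (truncations B) /\ (forall n, P n <-> Q n).
Proof.
  intros HP. destruct (all_bits_complete B P) as [b [Hb Hbits]].
  exists (fun x => (B <= x)%nat \/ nth x b false = true); split.
  - exact (in_map (fun b x => (B <= x)%nat \/ nth x b false = true) _ _ Hb).
  - intros n. destruct (Nat.lt_ge_cases n B) as [Hn|Hn].
    + rewrite (Hbits n Hn). split; [tauto|]. intros [H|H]; [lia|exact H].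
    + split; [tauto|intros _; exact (HP n Hn)].
Qed.

Lemma archimedean_inverse (eps : R) :
  (0 < eps)%R -> exists T : nat, (0 < T)%nat /\ (eps * INR T > 1)%R.
Proof.
  intros He. destruct (archimed (/ eps)) as [Hup _].
  assert (Hinv : (0 < / eps)%R) by (apply Rinv_0_lt_compat; exact He).
  assert (Hz : (0 < up (/ eps))%Z) by (apply lt_IZR; lra).
  exists (Z.to_nat (up (/ eps))). rewrite INR_IZR_INZ, Z2Nat.id by lia.
  split; [lia|].
  apply Rmult_lt_compat_l with (r := eps) in Hup; [|exact He].
  rewrite Rinv_r in Hup by lra. lra.
Qed.

Lemma conductor_lt_multiple (eps : R) (T m c : nat) :
  (eps * INR T > 1)%R -> (0 < T)%nat -> (INR m > eps * INR c)%R ->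
  (c < T * m)%nat.
Proof.
  intros HeT HT Hmc. apply INR_lt. rewrite mult_INR.
  assert (0 <= INR c)%R by apply pos_INR.
  assert (0 < INR T)%R by (apply lt_0_INR; exact HT).
  nra.
Qed.

Theorem lemma4 (eps : R) (k : nat) :
  (0 < eps)%R -> (0 < k)%nat ->
  exists L : list (nat -> Prop),
    forall (S : nat -> Prop) (m c : nat),
      numerical_semigroup S ->
      embedding_dimension S k ->
      is_multiplicity S m ->
      is_conductor S c ->
      (INR m > eps * INR c)%R ->
      exists T, In T L /\ (forall n, S n <-> T n).
Proof.
  intros He _.
  destruct (archimedean_inverse eps He) as [T [HT HeT]].
  exists (truncations (T * (1 + k) ^ T)).
  intros S m c _ [G [HG HlG]] Hmul Hcond Hmc.
  assert (HcB : (c <= T * (1 + length G) ^ T)%nat).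
  { apply (conductor_bound S G m c T HG Hmul Hcond).
    exact (conductor_lt_multiple eps T m c HeT HT Hmc). }
  rewrite HlG in HcB.
  apply truncations_complete. intros n Hn.
  destruct Hcond as [Hc _]. apply Hc. lia.
Qed.
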